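(* Let $(\mathcal{C},\mathbb{E},\mathfrak{s})$ satisfy (ET1), (ET2) and (ET3). If the additive subfunctor $\mathbb{F}\subseteq\mathbb{E}$ has enough special injective morphisms, then $(\mathrm{Ph}(\mathbb{F}),\mathbb{F}\text{-}\mathrm{inj})$ is an $\mathbb{E}$-cotorsion pair of ideals; in particular $\mathrm{Ph}(\mathbb{F})^{\perp_{\mathbb{E}}}=\mathbb{F}\text{-}\mathrm{inj}$.
   Context: $\mathcal{C}$ additive, $\mathbb{E}:\mathcal{C}^{\mathrm{op}}\times\mathcal{C}\to\mathrm{Ab}$ biadditive (ET1); for $\delta\in\mathbb{E}(C,A)$, $a:A\to A'$, $c:C'\to C$ put $a_\star\delta=\mathbb{E}(C,a)(\delta)$, $c^\star\delta=\mathbb{E}(c,A)(\delta)$. (ET2): $\mathfrak{s}$ is an additive realization (Nakaoka–Palu): each $\delta\in\mathbb{E}(C,A)$ is assigned an equivalence class of sequences $A\xrightarrow{x}B\xrightarrow{y}C$ (up to isomorphism of middle terms), $0$ is realized by split sequences, realization respects direct sums, and if $a_\star\delta=c^\star\delta'$ there is $b$ making the realizing sequences commute. Realized pairs are $\mathbb{E}$-triangles $A\to B\to C\overset{\delta}{\dashrightarrow}$; such commuting triples are morphisms of $\mathbb{E}$-triangles. (ET3): given $\mathbb{E}$-triangles $A\xrightarrow{x}B\to C\overset{\delta}{\dashrightarrow}$, $A'\xrightarrow{x'}B'\to C'\overset{\delta'}{\dashrightarrow}$ and $a,b$ with $bx=x'a$, there is $c$ with $(a,b,c)$ a morphism of $\mathbb{E}$-triangles.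 Additive subfunctor $\mathbb{F}$: subgroups $\mathbb{F}(C,A)\subseteq\mathbb{E}(C,A)$ stable under $a_\star,c^\star$; $\mathbb{F}$-triangles are $\mathbb{E}$-triangles with extension in $\mathbb{F}$. $\mathrm{Ph}(\mathbb{F})$: morphisms $\varphi:X\to C$ with $\varphi^\star\delta\in\mathbb{F}(X,A)$ for all $\delta\in\mathbb{E}(C,A)$. $\mathbb{F}\text{-}\mathrm{inj}$: morphisms $i:A\to Y$ with $i_\star\delta=0$ for all $\delta\in\mathbb{F}(C,A)$. $\mathcal{M}^{\perp_{\mathbb{E}}}$ and ${}^{\perp_{\mathbb{E}}}\mathcal{M}$: the classes of $g:A\to Y$ with $m^\star g_\star\delta=0$ (for all $m\in\mathcal{M}$, $m:X\to C$, $\delta\in\mathbb{E}(C,A)$), resp. of $g:X\to C$ with $g^\star m_\star\delta=0$ (for all $m\in\mathcal{M}$, $m:A\to Y$, $\delta\in\mathbb{E}(C,A)$). An $\mathbb{E}$-cotorsion pair is a pair of ideals $(\mathcal{I},\mathcal{J})$ with $\mathcal{I}={}^{\perp_{\mathbb{E}}}\mathcal{J}$, $\mathcal{J}=\mathcal{I}^{\perp_{\mathbb{E}}}$. $\mathbb{F}$ has enough special injective morphisms if for every $A$ there exist an $\mathbb{F}$-triangle $A\xrightarrow{e}B\to C\overset{\delta}{\dashrightarrow}$ with $e\in\mathbb{F}\text{-}\mathrm{inj}$, an $\mathbb{E}$-triangle $A\to B'\to C'\overset{\delta'}{\dashrightarrow}$ and a morphism of $\mathbb{E}$-triangles $(\mathrm{id}_A,b,\varphi)$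 from the first to the second with $\varphi\in\mathrm{Ph}(\mathbb{F})$. *)

From HB Require Import structures.
From mathcomp Require Import all_boot all_algebra.
Set Implicit Arguments. Unset Strict Implicit. Unset Printing Implicit Defensive.
Import GRing.Theory.
Local Open Scope ring_scope.

Record precat := PreCat {
  obj :> Type;
  Chom : obj -> obj -> zmodType;
  Ccomp : forall A B C : obj, Chom B C -> Chom A B -> Chom A C;
  Cid : forall A : obj, Chom A A }.
Arguments Chom {p}.
Arguments Ccomp {p A B C}.
Arguments Cid {p}.

Definition is_zero_obj (C : precat) (Z : C) : Prop :=
  forall X : C, (forall f : Chom X Z, f = 0) /\ (forall g : Chom Z X, g = 0).

Definition is_biproduct (C : precat) (A B S : C)
  (i1 : Chom A S) (i2 : Chom B S) (p1 : Chom S A) (p2 : Chom S B) : Prop :=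
  [/\ Ccomp p1 i1 = Cid A, Ccomp p2 i2 = Cid B, Ccomp p1 i2 = 0, Ccomp p2 i1 = 0
    & Ccomp i1 p1 + Ccomp i2 p2 = Cid S].

Definition additive_cat (C : precat) : Prop :=
  (((forall (A B D E : C) (h : Chom D E) (g : Chom B D) (f : Chom A B),
         Ccomp h (Ccomp g f) = Ccomp (Ccomp h g) f)) /\
     ((forall (A B : C) (f : Chom A B), Ccomp (Cid B) f = f)) /\
     ((forall (A B : C) (f : Chom A B), Ccomp f (Cid A) = f)) /\
     ((forall (A B D : C) (g g' : Chom B D) (f : Chom A B),
         Ccomp (g + g') f = Ccomp g f + Ccomp g' f)) /\
     ((forall (A B D : C) (g : Chom B D) (f f' : Chom A B),
         Ccomp g (f + f') = Ccomp g f + Ccomp g f')) /\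
     ((exists Z : C, is_zero_obj Z)) /\
     ((forall A B : C, exists (S : C) (i1 : Chom A S) (i2 : Chom B S)
          (p1 : Chom S A) (p2 : Chom S B), is_biproduct i1 i2 p1 p2))).

Definition is_iso (C : precat) (A B : C) (f : Chom A B) : Prop :=
  exists g : Chom B A, Ccomp g f = Cid A /\ Ccomp f g = Cid B.

(* Eext Cc A = E(Cc, A); Epush a = a_star = E(Cc,a); Epull c = c^star = E(c,A). *)
Record ext_data (C : precat) := ExtData {
  Eext : C -> C -> zmodType;
  Epush : forall A A' Cc : C, Chom A A' -> Eext Cc A -> Eext Cc A';
  Epull : forall Cc' Cc A : C, Chom Cc' Cc -> Eext Cc A -> Eext Cc' A }.
Arguments Eext {C} e.
Arguments Epush {C} e {A A' Cc}.
Arguments Epull {C} e {Cc' Cc A}.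

Definition ET1 (C : precat) (E : ext_data C) : Prop :=
  (((forall (A A' Cc : C) (a : Chom A A') (d d' : Eext E Cc A),
         Epush E a (d + d') = Epush E a d + Epush E a d')) /\
     ((forall (Cc' Cc A : C) (c : Chom Cc' Cc) (d d' : Eext E Cc A),
         Epull E c (d + d') = Epull E c d + Epull E c d')) /\
     ((forall (A Cc : C) (d : Eext E Cc A), Epush E (Cid A) d = d)) /\
     ((forall (A Cc : C) (d : Eext E Cc A), Epull E (Cid Cc) d = d)) /\
     ((forall (A A' A'' Cc : C) (a : Chom A A') (a' : Chom A' A'') (d : Eext E Cc A),
         Epush E (Ccomp a' a) d = Epush E a' (Epush E a d))) /\
     ((forall (Cc'' Cc' Cc A : C) (c : Chom Cc' Cc) (c' : Chom Cc'' Cc') (d : Eext E Cc A),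
         Epull E (Ccomp c c') d = Epull E c' (Epull E c d))) /\
     ((forall (A A' Cc' Cc : C) (a : Chom A A') (c : Chom Cc' Cc) (d : Eext E Cc A),
         Epush E a (Epull E c d) = Epull E c (Epush E a d))) /\
     ((forall (A A' Cc : C) (a a' : Chom A A') (d : Eext E Cc A),
         Epush E (a + a') d = Epush E a d + Epush E a' d)) /\
     ((forall (Cc' Cc A : C) (c c' : Chom Cc' Cc) (d : Eext E Cc A),
         Epull E (c + c') d = Epull E c d + Epull E c' d))).

(* s d x y : the sequence A --x--> B --y--> Cc belongs to the class s(d) *)
Definition realization (C : precat) (E : ext_data C) : Type :=
  forall A B Cc : C, Eext E Cc A -> Chom A B -> Chom B Cc -> Prop.

Definition equiv_seq (C : precat) (A B B' Cc : C)
  (x : Chom A B) (y : Chom B Cc) (x' : Chom A B') (y' : Chom B' Cc) : Prop :=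
  exists b : Chom B B', [/\ is_iso b, Ccomp b x = x' & Ccomp y' b = y].

Definition ET2 (C : precat) (E : ext_data C) (s : realization E) : Prop :=
  [/\ (* each d is assigned exactly one equivalence class of sequences *)
      (forall (A Cc : C) (d : Eext E Cc A),
         exists (B : C) (x : Chom A B) (y : Chom B Cc), s A B Cc d x y),
      (forall (A B B' Cc : C) (d : Eext E Cc A) (x : Chom A B) (y : Chom B Cc)
              (x' : Chom A B') (y' : Chom B' Cc),
         s A B Cc d x y -> (s A B' Cc d x' y' <-> equiv_seq x y x' y')),
      (forall (A A' B B' Cc Cc' : C) (d : Eext E Cc A) (d' : Eext E Cc' A')
              (a : Chom A A') (c : Chom Cc Cc')
              (x : Chom A B) (y : Chom B Cc) (x' : Chom A' B') (y' : Chom B' Cc'),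
         Epush E a d = Epull E c d' -> s A B Cc d x y -> s A' B' Cc' d' x' y' ->
         exists b : Chom B B', Ccomp b x = Ccomp x' a /\ Ccomp y' b = Ccomp c y),
      (forall (A Cc S : C) (i1 : Chom A S) (i2 : Chom Cc S) (p1 : Chom S A) (p2 : Chom S Cc),
         is_biproduct i1 i2 p1 p2 -> s A S Cc 0 i1 p2)
    & (* realization respects direct sums: s(d (+) d') = s(d) (+) s(d') *)
      (forall (A A' B B' Cc Cc' : C) (d : Eext E Cc A) (d' : Eext E Cc' A')
              (x : Chom A B) (y : Chom B Cc) (x' : Chom A' B') (y' : Chom B' Cc')
              (SA SB SC : C)
              (iA : Chom A SA) (iA' : Chom A' SA) (pA : Chom SA A) (pA' : Chom SA A')
              (iB : Chom B SB) (iB' : Chom B' SB) (pB : Chom SB B) (pB' : Chom SB B')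
              (iC : Chom Cc SC) (iC' : Chom Cc' SC) (pC : Chom SC Cc) (pC' : Chom SC Cc'),
         s A B Cc d x y -> s A' B' Cc' d' x' y' ->
         is_biproduct iA iA' pA pA' -> is_biproduct iB iB' pB pB' ->
         is_biproduct iC iC' pC pC' ->
         s SA SB SC (Epush E iA (Epull E pC d) + Epush E iA' (Epull E pC' d'))
           (Ccomp iB (Ccomp x pA) + Ccomp iB' (Ccomp x' pA'))
           (Ccomp iC (Ccomp y pB) + Ccomp iC' (Ccomp y' pB')))].

Definition tri_morph (C : precat) (E : ext_data C) (A B Cc A' B' Cc' : C)
  (d : Eext E Cc A) (x : Chom A B) (y : Chom B Cc)
  (d' : Eext E Cc' A') (x' : Chom A' B') (y' : Chom B' Cc')
  (a : Chom A A') (b : Chom B B') (c : Chom Cc Cc') : Prop :=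
  [/\ Ccomp b x = Ccomp x' a, Ccomp y' b = Ccomp c y & Epush E a d = Epull E c d'].

Definition ET3 (C : precat) (E : ext_data C) (s : realization E) : Prop :=
  forall (A B Cc A' B' Cc' : C)
         (d : Eext E Cc A) (x : Chom A B) (y : Chom B Cc)
         (d' : Eext E Cc' A') (x' : Chom A' B') (y' : Chom B' Cc')
         (a : Chom A A') (b : Chom B B'),
    s A B Cc d x y -> s A' B' Cc' d' x' y' -> Ccomp b x = Ccomp x' a ->
    exists c : Chom Cc Cc', tri_morph d x y d' x' y' a b c.

Definition subfunctor_pred (C : precat) (E : ext_data C) : Type :=
  forall Cc A : C, Eext E Cc A -> Prop.

Definition additive_subfunctor (C : precat) (E : ext_data C) (F : subfunctor_pred E) : Prop :=
  [/\ (forall (Cc A : C), F Cc A 0),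
      (forall (Cc A : C) (d d' : Eext E Cc A), F Cc A d -> F Cc A d' -> F Cc A (d - d')),
      (forall (A A' Cc : C) (a : Chom A A') (d : Eext E Cc A), F Cc A d -> F Cc A' (Epush E a d))
    & (forall (Cc' Cc A : C) (c : Chom Cc' Cc) (d : Eext E Cc A), F Cc A d -> F Cc' A (Epull E c d))].

Definition mclass (C : precat) : Type := forall X Y : C, Chom X Y -> Prop.

Definition is_ideal (C : precat) (I : mclass C) : Prop :=
  [/\ (forall X Y : C, I X Y 0),
      (forall (X Y : C) (f g : Chom X Y), I X Y f -> I X Y g -> I X Y (f - g))
    & (forall (W X Y Z : C) (h : Chom W X) (f : Chom X Y) (g : Chom Y Z),
         I X Y f -> I W Z (Ccomp g (Ccomp f h)))].

Definition same_class (C : precat) (I J : mclass C) : Prop :=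
  forall (X Y : C) (f : Chom X Y), I X Y f <-> J X Y f.

Definition Ph (C : precat) (E : ext_data C) (F : subfunctor_pred E) : mclass C :=
  fun X Cc (phi : Chom X Cc) => forall (A : C) (d : Eext E Cc A), F X A (Epull E phi d).

Definition Finj (C : precat) (E : ext_data C) (F : subfunctor_pred E) : mclass C :=
  fun A Y (i : Chom A Y) => forall (Cc : C) (d : Eext E Cc A), F Cc A d -> Epush E i d = 0.

Definition perp_r (C : precat) (E : ext_data C) (M : mclass C) : mclass C :=
  fun A Y (g : Chom A Y) =>
    forall (X Cc : C) (m : Chom X Cc), M X Cc m ->
    forall d : Eext E Cc A, Epull E m (Epush E g d) = 0.

Definition perp_l (C : precat) (E : ext_data C) (M : mclass C) : mclass C :=
  fun X Cc (g : Chom X Cc) =>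
    forall (A Y : C) (m : Chom A Y), M A Y m ->
    forall d : Eext E Cc A, Epull E g (Epush E m d) = 0.

Definition cotorsion_pair (C : precat) (E : ext_data C) (I J : mclass C) : Prop :=
  [/\ is_ideal I, is_ideal J, same_class I (perp_l E J) & same_class J (perp_r E I)].

Definition enough_special_inj (C : precat) (E : ext_data C) (s : realization E)
  (F : subfunctor_pred E) : Prop :=
  forall A : C,
    exists (B Cc : C) (e : Chom A B) (y : Chom B Cc) (d : Eext E Cc A),
      [/\ F Cc A d, s A B Cc d e y, Finj F e &
        exists (B' Cc' : C) (x' : Chom A B') (y' : Chom B' Cc') (d' : Eext E Cc' A)
               (b : Chom B B') (phi : Chom Cc Cc'),
          [/\ s A B' Cc' d' x' y', tri_morph d e y d' x' y' (Cid A) b phi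
            & Ph F phi]].

(* The inclusions Ph(F) <= ^(F-inj) and F-inj <= Ph(F)^ hold for any subfunctor,
   because E-orthogonality reduces to the commutation a_* c^* = c^* a_*.  The two
   converse inclusions use exactness of E(X, A) -> E(X, B) at an E-triangle
   A -e-> B -> C0 (dl): an extension killed by e_* is a pullback c^* dl.
   Taking for e the F-injective inflation of an F-triangle puts c^* dl in F, and
   the phantom phi through which dl factors makes g_* dl vanish for g in Ph(F)^. *)
From HB Require Import structures.
From mathcomp Require Import all_boot all_algebra.
Set Implicit Arguments. Unset Strict Implicit. Unset Printing Implicit Defensive.
Import GRing.Theory.
Local Open Scope ring_scope.

Lemma morph_add0 (U V : zmodType) (f : U -> V) :
  {morph f : x y / x + y} -> f 0 = 0.
Proof. by move=> fD; apply: (addrI (f 0)); rewrite -fD !addr0. Qed.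

Lemma morph_addB (U V : zmodType) (f : U -> V) :
  {morph f : x y / x + y} -> {morph f : x y / x - y}.
Proof.
move=> fD x y; rewrite fD; congr (_ + _).
by apply/eqP; rewrite -addr_eq0 -fD addNr (morph_add0 fD).
Qed.

Section ET1Theory.
Variables (C : precat) (E : ext_data C).
Hypothesis HE : ET1 E.

Lemma EpushD (A A' Cc : C) (a : Chom A A') (d d' : Eext E Cc A) :
  Epush E a (d + d') = Epush E a d + Epush E a d'.
Proof. by case: HE. Qed.

Lemma EpullD (Cc' Cc A : C) (c : Chom Cc' Cc) (d d' : Eext E Cc A) :
  Epull E c (d + d') = Epull E c d + Epull E c d'.
Proof. by case: HE => _ []. Qed.

Lemma Epush_id (A Cc : C) (d : Eext E Cc A) : Epush E (Cid A) d = d.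
Proof. by case: HE => _ [_ []]. Qed.

Lemma Epull_id (A Cc : C) (d : Eext E Cc A) : Epull E (Cid Cc) d = d.
Proof. by case: HE => _ [_ [_ []]]. Qed.

Lemma Epush_comp (A A' A'' Cc : C) (a : Chom A A') (a' : Chom A' A'')
    (d : Eext E Cc A) :
  Epush E (Ccomp a' a) d = Epush E a' (Epush E a d).
Proof. by case: HE => _ [_ [_ [_ []]]]. Qed.

Lemma Epull_comp (Cc'' Cc' Cc A : C) (c : Chom Cc' Cc) (c' : Chom Cc'' Cc')
    (d : Eext E Cc A) :
  Epull E (Ccomp c c') d = Epull E c' (Epull E c d).
Proof. by case: HE => _ [_ [_ [_ [_ []]]]]. Qed.

Lemma Epush_pull (A A' Cc' Cc : C) (a : Chom A A') (c : Chom Cc' Cc)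
    (d : Eext E Cc A) :
  Epush E a (Epull E c d) = Epull E c (Epush E a d).
Proof. by case: HE => _ [_ [_ [_ [_ [_ []]]]]]. Qed.

Lemma EpushDl (A A' Cc : C) (a a' : Chom A A') (d : Eext E Cc A) :
  Epush E (a + a') d = Epush E a d + Epush E a' d.
Proof. by case: HE => _ [_ [_ [_ [_ [_ [_ []]]]]]]. Qed.

Lemma EpullDl (Cc' Cc A : C) (c c' : Chom Cc' Cc) (d : Eext E Cc A) :
  Epull E (c + c') d = Epull E c d + Epull E c' d.
Proof. by case: HE => _ [_ [_ [_ [_ [_ [_ []]]]]]]. Qed.

Lemma Epush0r (A A' Cc : C) (a : Chom A A') : Epush E a (0 : Eext E Cc A) = 0.
Proof. exact: morph_add0 (EpushD a). Qed.

Lemma Epull0r (Cc' Cc A : C) (c : Chom Cc' Cc) : Epull E c (0 : Eext E Cc A) = 0.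
Proof. exact: morph_add0 (EpullD c). Qed.

Lemma Epush0l (A A' Cc : C) (d : Eext E Cc A) : Epush E (0 : Chom A A') d = 0.
Proof. by apply: (morph_add0 (f := Epush E ^~ d)) => ??; apply: EpushDl. Qed.

Lemma Epull0l (Cc' Cc A : C) (d : Eext E Cc A) : Epull E (0 : Chom Cc' Cc) d = 0.
Proof. by apply: (morph_add0 (f := Epull E ^~ d)) => ??; apply: EpullDl. Qed.

Lemma EpushBl (A A' Cc : C) (a a' : Chom A A') (d : Eext E Cc A) :
  Epush E (a - a') d = Epush E a d - Epush E a' d.
Proof. by apply: (morph_addB (f := Epush E ^~ d)) => ??; apply: EpushDl. Qed.

Lemma EpullBl (Cc' Cc A : C) (c c' : Chom Cc' Cc) (d : Eext E Cc A) :
  Epull E (c - c') d = Epull E c d - Epull E c' d.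
Proof. by apply: (morph_addB (f := Epull E ^~ d)) => ??; apply: EpullDl. Qed.

End ET1Theory.

(* Realize th by A -x-> M -> X; as e_* th = 0 = (id_X)^* 0, (ET2) maps this triangle
   to the split triangle B -> B (+) X -> X, and composing with the projection onto B
   gives b with b x = e, so (ET3) yields c with th = (id_A)_* th = c^* dl. *)
Lemma Epush_eq0_Epull (C : precat) (E : ext_data C) (s : realization E)
    (HC : additive_cat C) (HE : ET1 E) (H2 : ET2 s) (H3 : ET3 s)
    (A B C0 X : C) (e : Chom A B) (y : Chom B C0) (dl : Eext E C0 A)
    (th : Eext E X A) :
  s A B C0 dl e y -> Epush E e th = 0 -> exists c : Chom X C0, th = Epull E c dl.
Proof.
move=> sdl eth0.
have [compA [comp1f [compf1 [_ [_ [_ biprod]]]]]] := HC.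
case: H2 => realized _ realizing split0 _.
have [M [x [y0 sth]]] := realized _ _ th.
have [S [i1 [i2 [p1 [p2 bS]]]]] := biprod B X.
have eth : Epush E e th = Epull E (Cid X) 0 by rewrite eth0 Epull_id.
have [b [bx _]] := realizing _ _ _ _ _ _ _ _ _ _ _ _ _ _ eth sth (split0 _ _ _ _ _ _ _ bS).
have p1bx : Ccomp (Ccomp p1 b) x = Ccomp e (Cid A).
  by case: bS => p1i1 _ _ _ _; rewrite -compA bx compA p1i1 comp1f compf1.
have [c [_ _ thc]] := H3 _ _ _ _ _ _ _ _ _ _ _ _ _ _ sth sdl p1bx.
by exists c; rewrite -thc Epush_id.
Qed.

Section PhantomsAndInjectives.
Variables (C : precat) (E : ext_data C) (F : subfunctor_pred E).
Hypotheses (HE : ET1 E) (HF : additive_subfunctor F).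

Lemma Ph_ideal : is_ideal (Ph F).
Proof.
case: HF => F0 FB _ Fpull; split.
- by move=> X Y A d; rewrite Epull0l.
- by move=> X Y f g Pf Pg A d; rewrite EpullBl //; apply: FB.
- by move=> W X Y Z h f g Pf A d; rewrite !Epull_comp //; apply: Fpull.
Qed.

Lemma Finj_ideal : is_ideal (Finj F).
Proof.
case: HF => _ _ Fpush _; split.
- by move=> X Y Cc d _; rewrite Epush0l.
- by move=> X Y f g If Ig Cc d Fd; rewrite EpushBl // If // Ig // subrr.
- move=> W X Y Z h f g If Cc d Fd.
  by rewrite !Epush_comp // (If _ _ (Fpush _ _ _ h _ Fd)) Epush0r.
Qed.

Lemma Ph_sub_perp_Finj X Cc (g : Chom X Cc) : Ph F g -> perp_l E (Finj F) g.
Proof. by move=> Pg A Y m Im d; rewrite -Epush_pull //; apply: Im. Qed.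

Lemma Finj_sub_perp_Ph A Y (g : Chom A Y) : Finj F g -> perp_r E (Ph F) g.
Proof. by move=> Ig X Cc m Pm d; rewrite -Epush_pull //; apply: Ig. Qed.

Variable s : realization E.
Hypotheses (HC : additive_cat C) (H2 : ET2 s) (H3 : ET3 s)
  (Hsp : enough_special_inj s F).

Lemma perp_Finj_sub_Ph X Cc (g : Chom X Cc) : perp_l E (Finj F) g -> Ph F g.
Proof.
move=> Og A d.
have [B [C0 [e [y [dl [Fdl sdl Ie _]]]]]] := Hsp A.
have egd0 : Epush E e (Epull E g d) = 0 by rewrite Epush_pull //; apply: Og.
have [c ->] := Epush_eq0_Epull HC HE H2 H3 sdl egd0.
by case: HF => _ _ _; apply.
Qed.

Lemma perp_Ph_sub_Finj A Y (g : Chom A Y) : perp_r E (Ph F) g -> Finj F g.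
Proof.
move=> Og Cc d Fd.
have [B [C0 [e [y [dl [_ sdl Ie [B' [C' [_ [_ [dl' [_ [phi [_ [_ _ dl_phi] Pphi]]]]]]]]]]]]]] :=
  Hsp A.
have [c ->] := Epush_eq0_Epull HC HE H2 H3 sdl (Ie _ _ Fd).
have gdl0 : Epush E g dl = 0.
  by rewrite -(Epush_id HE dl) dl_phi Epush_pull //; apply: Og.
by rewrite Epush_pull // gdl0 Epull0r.
Qed.

End PhantomsAndInjectives.

Theorem corollary3p14 (C : precat) (E : ext_data C) (s : realization E)
  (F : subfunctor_pred E)
  (HC : additive_cat C) (H1 : ET1 E) (H2 : ET2 s) (H3 : ET3 s)
  (HF : additive_subfunctor F) (Hsp : enough_special_inj s F) :
  cotorsion_pair E (Ph F) (Finj F) /\ same_class (perp_r E (Ph F)) (Finj F).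
Proof.
have perp_Ph : same_class (perp_r E (Ph F)) (Finj F).
  move=> A Y g; split; first exact: (perp_Ph_sub_Finj H1 HC H2 H3 Hsp).
  exact: Finj_sub_perp_Ph.
split=> //; split; [exact: Ph_ideal | exact: Finj_ideal | | ].
- move=> X Cc g; split; first exact: Ph_sub_perp_Finj.
  exact: (perp_Finj_sub_Ph H1 HF HC H2 H3 Hsp).
- by move=> A Y g; split=> /perp_Ph.
Qed.
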